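(* Let $0<\tau\le L$ and let $f:\mathbb{R}^n\to\mathbb{R}$ be strongly convex with constant $\tau$ with $L$-Lipschitz gradient, with minimizer $x^*$. Consider the following randomized coordinate-descent algorithm with input $x_0\in\mathbb{R}^n$ and $\eta>0$: for $k=0,1,2,\dots$, choose $d_k=\mathbf{e}_i$ with $i\in\{1,\dots,n\}$ uniformly at random (independently of the past), obtain from a line search a step $\alpha_k$ with $|\alpha_k-\alpha^*|\le\eta$ where $\alpha^*=\arg\min_{\alpha\in\mathbb{R}} f(x_k+\alpha d_k)$, and set $x_{k+1}=x_k+\alpha_k d_k$. Assume that for the given $\eta$ each such line search uses at most $T_\ell(\eta)$ queries to a pairwise comparison oracle. If $x_K$ is the estimate of $x^*$ produced after requesting no more than $K$ pairwise comparisons, then \[ \sup_f \mathbb{E}[ f(x_{K})-f(x^* ) ] \leq \frac{4nL^2 \eta^2}{\tau} \quad \text{ whenever } \quad K \geq \frac{4n L}{ \tau} \log\left( \frac{f(x_0)-f(x^* )}{\eta^2\, 2 n L^2 / \tau} \right) T_\ell(\eta), \] where the expectation is with respect to the random choice of $d_k$ at each iteration and the supremum is over such $f$.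
   Context: $\mathbf{e}_i$ denotes the $i$-th standard basis vector of $\mathbb{R}^n$. A function $f$ is strongly convex with constant $\tau>0$ if $f(y)\ge f(x)+\langle\nabla f(x),y-x\rangle+\frac{\tau}{2}\|x-y\|^2$ for all $x,y$; its gradient is $L$-Lipschitz if $\|\nabla f(x)-\nabla f(y)\|\le L\|x-y\|$. A pairwise comparison oracle answers queries $(x,y)$ with a value in $\{-1,1\}$ intended to indicate $\mathrm{sign}\{f(y)-f(x)\}$. *)

From HB Require Import structures.
From mathcomp Require Import all_boot all_order all_algebra.
From mathcomp Require Import reals exp.
Set Implicit Arguments. Unset Strict Implicit. Unset Printing Implicit Defensive.
Import Order.TTheory GRing.Theory Num.Theory.
Local Open Scope ring_scope.

Section Defs.
Variables (R : realType) (n : nat).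

Definition vec := 'I_n -> R.

Definition dotv (x y : vec) : R := \sum_(j < n) x j * y j.
Definition normv (x : vec) : R := Num.sqrt (dotv x x).
Definition subv (x y : vec) : vec := fun j => x j - y j.
Definition add_coord (x : vec) (a : R) (i : 'I_n) : vec :=
  fun j => x j + a * (j == i)%:R.

Definition is_gradient (f : vec -> R) (g : vec -> vec) : Prop :=
  forall x : vec, forall eps : R, 0 < eps -> exists2 delta : R, 0 < delta &
    forall y : vec, normv (subv y x) < delta ->
      `|f y - f x - dotv (g x) (subv y x)| <= eps * normv (subv y x).

Definition strongly_convex_grad (f : vec -> R) (g : vec -> vec) (tau : R) : Prop :=
  forall x y : vec,
    f y >= f x + dotv (g x) (subv y x) + tau / 2 * normv (subv x y) ^+ 2.

Definition lipschitz_grad (g : vec -> vec) (L : R) : Prop :=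
  forall x y : vec, normv (subv (g x) (g y)) <= L * normv (subv x y).

Definition is_minimizer (f : vec -> R) (xs : vec) : Prop :=
  forall y : vec, f xs <= f y.

(* A history is the list of
   chosen coordinates, MOST RECENT FIRST; alpha (i :: h) is the step returned
   by the line search along e_i at the iterate reached after history h. *)
Fixpoint iterate (x0 : vec) (alpha : seq 'I_n -> R) (h : seq 'I_n) : vec :=
  match h with
  | [::] => x0
  | i :: h' => add_coord (iterate x0 alpha h') (alpha (i :: h')) i
  end.

Definition accurate_linesearch (f : vec -> R) (x0 : vec)
    (alpha : seq 'I_n -> R) (eta : R) : Prop :=
  forall (h : seq 'I_n) (i : 'I_n) (beta : R),
    (forall a : R, f (add_coord (iterate x0 alpha h) beta i)
                   <= f (add_coord (iterate x0 alpha h) a i)) ->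
    `|alpha (i :: h) - beta| <= eta.

(* Expectation of f(x_k) - f(x^* ) when the k coordinates are drawn
   independently and uniformly from {1..n}. *)
Definition expected_gap (f : vec -> R) (x0 xs : vec) (alpha : seq 'I_n -> R)
    (k : nat) : R :=
  (n%:R ^+ k)^-1 * \sum_(s : k.-tuple 'I_n) (f (iterate x0 alpha s) - f xs).

End Defs.

From HB Require Import structures.
From mathcomp Require Import all_boot all_order all_algebra.
From mathcomp Require Import reals exp.
From mathcomp Require Import boolp classical_sets.
From mathcomp Require Import ring lra.
Set Implicit Arguments.
Unset Strict Implicit.
Unset Printing Implicit Defensive.

Import Order.TTheory GRing.Theory Num.Theory.
Local Open Scope ring_scope.
Local Notation expR := sequences.expR.

(** Along a coordinate line, strong convexity and the Lipschitz gradient make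
    [f] a one-dimensional function that is strongly convex and [L]-smooth, so
    an exact line search exists, and an [eta]-accurate one still decreases [f]
    by at least [g_i(x)^2 / 4L] up to an additive [L eta^2].  Averaging over
    the coordinate and using the Polyak-Lojasiewicz bound
    [|g(x)|^2 >= 2 tau (f(x) - min f)] gives the expected contraction
    [E_(k+1) <= (1 - rho) E_k + rho eps] with [rho = tau / 2nL] and
    [eps = 2 n L^2 eta^2 / tau].  Hence [E_k <= eps + (1 - rho)^k (E_0 - eps)],
    and [(1 - rho)^k <= exp (- rho k)] makes the second term at most [eps]
    after [2 ln (E_0 / eps) / rho] iterations; each iteration costs at most
    [T_l(eta)] comparisons. *)

Section Vectors.
Variables (R : realType) (n : nat).
Implicit Types (x v : vec R n) (i : 'I_n).

Lemma dotv_add_coord v x a b i :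
  dotv v (subv (add_coord x a i) (add_coord x b i)) = (a - b) * v i.
Proof.
rewrite /dotv /subv /add_coord (bigD1 i) //= big1 => [|j /negbTE ->].
  by rewrite eqxx addr0 !mulr1; ring.
by rewrite !mulr0 !addr0 subrr mulr0.
Qed.

Lemma normv_add_coord x a b i :
  normv (subv (add_coord x a i) (add_coord x b i)) = `|a - b|.
Proof.
rewrite /normv dotv_add_coord /subv /add_coord eqxx -sqrtr_sqr.
by congr Num.sqrt; rewrite !mulr1 expr2; ring.
Qed.

Lemma dotvv_ge0 v : 0 <= dotv v v.
Proof. by apply: sumr_ge0 => j _; rewrite -expr2 sqr_ge0. Qed.

Lemma normv_sqr v : normv v ^+ 2 = dotv v v.
Proof. by rewrite /normv sqr_sqrtr // dotvv_ge0. Qed.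

Lemma coord_le_normv v i : `|v i| <= normv v.
Proof.
rewrite /normv -sqrtr_sqr; apply: ler_wsqrtr.
rewrite /dotv (bigD1 i) //= expr2 lerDl; apply: sumr_ge0 => j _.
by rewrite -expr2 sqr_ge0.
Qed.

Lemma add_coord0 x i : add_coord x 0 i = x.
Proof. by apply: funext => j; rewrite /add_coord mul0r addr0. Qed.

End Vectors.

Lemma increasing_lipschitz_root (R : realType) (psi : R -> R) (L lo hi : R) :
  0 < L -> (forall a b, b < a -> psi b < psi a) ->
  (forall a b, `|psi a - psi b| <= L * `|a - b|) ->
  psi lo <= 0 -> 0 <= psi hi -> exists c, psi c = 0.
Proof.
move=> L0 incr lip psi_lo psi_hi.
pose S := [set a : R | psi a <= 0]%classic.
have ubS : ubound S hi.
  by move=> a Sa; rewrite leNgt; apply/negP => /incr; rewrite /S /= in Sa; lra.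
have supS : has_sup S by split; [exists lo | exists hi].
exists (sup S); set c := sup S.
have [psi_neg|psi_pos|//] := ltgtP (psi c) 0.
- pose d := - psi c / (2 * L).
  have d0 : 0 < d by rewrite /d divr_gt0 ?oppr_gt0 ?mulr_gt0.
  have Ld : L * d = - psi c / 2 by rewrite /d; field; rewrite gt_eqF.
  have Scd : S (c + d).
    rewrite /S /=; have := lip (c + d) c.
    rewrite addrAC subrr add0r (gtr0_norm d0) Ld.
    have := ler_norm (psi (c + d) - psi c); lra.
  have := sup_upper_bound supS Scd; rewrite -/c; lra.
- pose d := psi c / (2 * L).
  have d0 : 0 < d by rewrite /d divr_gt0 // mulr_gt0.
  have [e Se ce] := sup_adherent d0 supS; rewrite -/c in ce.
  have ec : e <= c by apply: sup_upper_bound.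
  have Ld : L * d = psi c / 2 by rewrite /d; field; rewrite gt_eqF.
  have := lip c e; rewrite (ger0_norm (_ : 0 <= c - e)) ?subr_ge0 //.
  have := ler_norm (psi c - psi e); rewrite /S /= in Se.
  have : L * (c - e) < L * d by rewrite ltr_pM2l //; lra.
  lra.
Qed.

Lemma strongly_monotone_lipschitz_root (R : realType) (psi : R -> R) (tau L : R) :
  0 < tau -> 0 < L ->
  (forall a b, tau * (a - b) ^+ 2 <= (psi a - psi b) * (a - b)) ->
  (forall a b, `|psi a - psi b| <= L * `|a - b|) ->
  exists c, psi c = 0.
Proof.
move=> tau0 L0 mon lip.
have incr a b : b < a -> psi b < psi a.
  move=> ba; have := mon a b; rewrite expr2.
  have : 0 < tau * ((a - b) * (a - b)) by rewrite !mulr_gt0 // subr_gt0.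
  nra.
(* strong monotonicity brackets the root by [+-|psi 0| / tau] *)
pose u := `|psi 0| / tau.
have tau_u : tau * u = `|psi 0| by rewrite /u mulrC divfK // gt_eqF.
have u0 : 0 <= u by rewrite /u divr_ge0 // ltW.
have := ler_norm (psi 0); have := ler_norm (- psi 0); rewrite normrN => n1 n2.
apply: (increasing_lipschitz_root L0 incr lip (lo := - u) (hi := u)).
- have := mon 0 (- u); rewrite expr2 sub0r opprK.
  have [u_eq0|u_neq0] := eqVneq u 0.
    by move: tau_u; rewrite u_eq0 oppr0 mulr0; lra.
  have : 0 < u by rewrite lt_def u_neq0.
  nra.
- have := mon u 0; rewrite expr2 subr0.
  have [u_eq0|u_neq0] := eqVneq u 0.
    by move: tau_u; rewrite u_eq0 mulr0; lra.
  have : 0 < u by rewrite lt_def u_neq0.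
  nra.
Qed.

Section CoordinateLine.
Variables (R : realType) (n : nat) (tau L : R) (f : vec R n -> R) (g : vec R n -> vec R n).
Hypothesis tau_gt0 : 0 < tau.
Hypothesis tau_le_L : tau <= L.
Hypothesis sc : strongly_convex_grad f g tau.
Hypothesis lip : lipschitz_grad g L.
Variables (x : vec R n) (i : 'I_n).

Let phi a := f (add_coord x a i).
Let psi a := g (add_coord x a i) i.

Let L_gt0 : 0 < L := lt_le_trans tau_gt0 tau_le_L.

Lemma strongly_convex_line a b :
  phi a + psi a * (b - a) + tau / 2 * (a - b) ^+ 2 <= phi b.
Proof.
have := sc (add_coord x a i) (add_coord x b i).
by rewrite dotv_add_coord normv_add_coord real_normK ?num_real // mulrC.
Qed.

Lemma strongly_monotone_line a b : tau * (a - b) ^+ 2 <= (psi a - psi b) * (a - b).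
Proof.
have := strongly_convex_line a b; have := strongly_convex_line b a.
rewrite -[(b - a) ^+ 2]sqrrN -[b - a]opprB opprK mulrN.
lra.
Qed.

Lemma lipschitz_line a b : `|psi a - psi b| <= L * `|a - b|.
Proof.
rewrite /psi.
apply: le_trans (coord_le_normv (subv (g (add_coord x a i)) (g (add_coord x b i))) i) _.
by rewrite -(normv_add_coord x _ _ i); apply: lip.
Qed.

Lemma smooth_line a b : phi b <= phi a + psi a * (b - a) + L * (b - a) ^+ 2.
Proof.
have := strongly_convex_line b a.
have : 0 <= tau / 2 * (b - a) ^+ 2 by rewrite mulr_ge0 ?sqr_ge0 ?divr_ge0 // ltW.
have : (psi b - psi a) * (b - a) <= L * (b - a) ^+ 2.
  apply: le_trans (ler_norm _) _; rewrite normrM -(real_normK (num_real (b - a))).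
  by rewrite expr2 mulrA ler_wpM2r //; apply: lipschitz_line.
rewrite -[a - b]opprB mulrN; lra.
Qed.

Lemma exists_line_minimizer : exists2 c, psi c = 0 & forall a, phi c <= phi a.
Proof.
have [c psi_c] := strongly_monotone_lipschitz_root tau_gt0 L_gt0
  strongly_monotone_line lipschitz_line.
exists c => // a; have := strongly_convex_line c a; rewrite psi_c mul0r addr0.
have : 0 <= tau / 2 * (c - a) ^+ 2 by rewrite mulr_ge0 ?sqr_ge0 ?divr_ge0 // ltW.
lra.
Qed.

Lemma inexact_line_search_decrease al eta :
  (forall beta, (forall a, phi beta <= phi a) -> `|al - beta| <= eta) ->
  phi al <= f x - g x i ^+ 2 / (4 * L) + L * eta ^+ 2.
Proof.
move=> accurate.
have L0 := L_gt0.
have [c psi_c c_min] := exists_line_minimizer.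
have phi0 : phi 0 = f x by rewrite /phi add_coord0.
have psi0 : psi 0 = g x i by rewrite /psi add_coord0.
(* compare the exact minimum with one gradient step of length [g_i(x) / 2L] *)
have exact_decrease : phi c <= f x - g x i ^+ 2 / (4 * L).
  have := smooth_line 0 (- psi 0 / (2 * L)); rewrite phi0 psi0 => step.
  apply: le_trans (c_min _) _; apply: le_trans step _.
  by rewrite le_eqVlt; apply/orP; left; apply/eqP; field; rewrite gt_eqF.
have near_min : phi al <= phi c + L * (al - c) ^+ 2.
  by have := smooth_line c al; rewrite psi_c mul0r addr0.
have : L * (al - c) ^+ 2 <= L * eta ^+ 2.
  rewrite ler_pM2l // -(real_normK (num_real (al - c))).
  have eta0 : 0 <= eta := le_trans (normr_ge0 _) (accurate c c_min).
  by rewrite ler_sqr ?nnegrE ?normr_ge0 // accurate.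
lra.
Qed.

End CoordinateLine.

Lemma strongly_convex_gap_le_grad_sqr (R : realType) (n : nat) (tau : R)
    (f : vec R n -> R) (g : vec R n -> vec R n) (x xs : vec R n) :
  0 < tau -> strongly_convex_grad f g tau ->
  2 * tau * (f x - f xs) <= \sum_j g x j ^+ 2.
Proof.
move=> tau0 sc; have := sc x xs; rewrite normv_sqr /dotv.
(* minimizing [g_j d + tau/2 d^2] over each coordinate [d] gives [- g_j^2 / 2 tau] *)
have coordwise : - (\sum_j g x j ^+ 2) / (2 * tau) <=
    \sum_j g x j * subv xs x j + tau / 2 * \sum_j subv x xs j * subv x xs j.
  rewrite mulr_sumr -big_split /= mulNr mulr_suml -sumrN; apply: ler_sum => j _.
  rewrite /subv -[x j - xs j]opprB; set d := xs j - x j.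
  have : 0 <= (tau * d + g x j) ^+ 2 / (2 * tau).
    by rewrite divr_ge0 ?sqr_ge0 // mulr_ge0 // ltW.
  have -> : (tau * d + g x j) ^+ 2 / (2 * tau) = g x j * d + tau / 2 * (- d * - d)
      - - (g x j ^+ 2 / (2 * tau)) by field; rewrite gt_eqF.
  lra.
have scaled : 2 * tau * (- (\sum_j g x j ^+ 2) / (2 * tau)) = - (\sum_j g x j ^+ 2).
  by field; rewrite gt_eqF.
move=> h; have : 2 * tau * (- (\sum_j g x j ^+ 2) / (2 * tau)) <= 2 * tau * (f xs - f x).
  by rewrite ler_pM2l ?mulr_gt0 //; lra.
rewrite scaled; lra.
Qed.

Lemma sum_tuple_cons (V : nmodType) (T : finType) k (F : k.+1.-tuple T -> V) :
  \sum_(t : k.+1.-tuple T) F t = \sum_(s : k.-tuple T) \sum_(i : T) F [tuple of i :: s].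
Proof.
rewrite (reindex (fun p : T * k.-tuple T => [tuple of p.1 :: p.2])) /=.
  by rewrite exchange_big pair_big /=.
exists (fun t => (thead t, [tuple of behead t])) => [[i s] _|t _] /=.
  by rewrite theadE; congr pair; apply: val_inj.
by rewrite -tuple_eta.
Qed.

Lemma sum_tuple0 (V : nmodType) (T : finType) (F : 0.-tuple T -> V) :
  \sum_(t : 0.-tuple T) F t = F [tuple].
Proof. by rewrite (bigD1 [tuple]) //= big1 ?addr0 // => t /eqP []; apply: tuple0. Qed.

Lemma affine_contraction_unroll (R : realFieldType) (u : nat -> R) (rho eps : R) :
  0 <= rho <= 1 -> (forall k, u k.+1 <= (1 - rho) * u k + rho * eps) ->
  forall k, u k <= eps + (1 - rho) ^+ k * (u 0 - eps).
Proof.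
move=> /andP[rho0 rho1] step; elim=> [|k IH]; first by rewrite expr0 mul1r; lra.
apply: le_trans (step k) _; rewrite exprS.
have : (1 - rho) * u k <= (1 - rho) * (eps + (1 - rho) ^+ k * (u 0 - eps)).
  by rewrite ler_wpM2l //; lra.
move: ((1 - rho) ^+ k) => Q.
have -> : (1 - rho) * (eps + Q * (u 0 - eps)) = eps + (1 - rho) * Q * (u 0 - eps) - rho * eps.
  by ring.
lra.
Qed.

Lemma geometric_tail_le (R : realType) (rho eps e0 : R) (k : nat) :
  0 < rho <= 1 / 2 -> 0 < eps ->
  2 * ln (e0 / eps) < rho * k.+1%:R ->
  (1 - rho) ^+ k * (e0 - eps) <= eps.
Proof.
move=> /andP[rho0 rho_half] eps0 enough_steps.
set q := 1 - rho.
have q0 : 0 <= q by rewrite /q; lra.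
have qk0 : 0 <= q ^+ k by rewrite exprn_ge0.
have qk1 : q ^+ k <= 1 by rewrite exprn_ile1 //; rewrite /q; lra.
have [e0_small|e0_big] := lerP e0 (2 * eps); first nra.
pose r := e0 / eps.
have r0 : 0 < r by rewrite /r divr_gt0 //; lra.
have e0r : e0 = r * eps by rewrite /r divfK // gt_eqF.
have q_expR : q * expR rho <= 1.
  have := expR_ge1Dx (- rho); rewrite expRN -/q => h.
  apply: le_trans (ler_wpM2r (ltW (expR_gt0 rho)) h) _.
  by rewrite mulVf ?gt_eqF ?expR_gt0.
have r_sqr : r ^+ 2 <= expR rho ^+ k.+1.
  rewrite -expRM_natr -(lnK r0) -expRM_natl; apply/ltW; rewrite ltr_expR.
  exact: enough_steps.
have qr_sqr : q ^+ k.+1 * r ^+ 2 <= 1.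
  apply: le_trans (_ : q ^+ k.+1 * expR rho ^+ k.+1 <= 1).
    by rewrite ler_wpM2l // exprn_ge0.
  by rewrite -exprMn exprn_ile1 // mulr_ge0 // ltW // expR_gt0.
have qk_le : q ^+ k <= 2 * q ^+ k.+1.
  have : 1 / 2 <= q by rewrite /q; lra.
  rewrite exprS; nra.
have : q ^+ k.+1 * r <= 1 / 2.
  have := exprn_ge0 k.+1 q0; rewrite expr2 in qr_sqr; nra.
rewrite e0r; move: (q ^+ k.+1) qk_le qr_sqr => Q; nra.
Qed.

Lemma contraction_rate_bounds (R : realFieldType) (n : nat) (tau L : R) :
  (0 < n)%N -> 0 < tau -> tau <= L -> 0 < tau / (2 * n%:R * L) <= 1 / 2.
Proof.
move=> n_gt0 tau_gt0 tau_le_L.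
have L0 := lt_le_trans tau_gt0 tau_le_L.
have N1 : 1 <= n%:R :> R by rewrite ler1n.
rewrite divr_gt0 ?mulr_gt0 ?ltr0n //= ler_pdivrMr ?mulr_gt0 ?ltr0n //.
have : tau <= n%:R * L by apply: le_trans tau_le_L _; rewrite ler_peMl // ltW.
lra.
Qed.

Section ExpectedGap.
Variables (R : realType) (n : nat) (tau L eta : R)
    (f : vec R n -> R) (g : vec R n -> vec R n) (xs x0 : vec R n)
    (alpha : seq 'I_n -> R).
Hypothesis n_gt0 : (0 < n)%N.
Hypothesis tau_gt0 : 0 < tau.
Hypothesis tau_le_L : tau <= L.
Hypothesis sc : strongly_convex_grad f g tau.
Hypothesis lip : lipschitz_grad g L.
Hypothesis accurate : accurate_linesearch f x0 alpha eta.

Let gap h := f (iterate x0 alpha h) - f xs.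

Lemma sum_coord_step_le h :
  \sum_(i < n) gap (i :: h) <= (n%:R - tau / (2 * L)) * gap h + n%:R * (L * eta ^+ 2).
Proof.
have L0 := lt_le_trans tau_gt0 tau_le_L.
set x := iterate x0 alpha h.
have descent : \sum_(i < n) gap (i :: h) <=
    \sum_(i < n) ((f x - f xs + L * eta ^+ 2) - g x i ^+ 2 / (4 * L)).
  apply: ler_sum => i _; rewrite /gap /=.
  have := inexact_line_search_decrease tau_gt0 tau_le_L sc lip (@accurate h i).
  rewrite -/x; lra.
apply: le_trans descent _.
rewrite sumrB sumr_const card_ord -mulr_suml -mulr_natl.
have : 2 * tau * (f x - f xs) / (4 * L) <= (\sum_j g x j ^+ 2) / (4 * L).
  by rewrite ler_pM2r ?invr_gt0 ?mulr_gt0 // strongly_convex_gap_le_grad_sqr.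
have -> : 2 * tau * (f x - f xs) / (4 * L) = tau / (2 * L) * (f x - f xs).
  by field; rewrite gt_eqF.
rewrite /gap -/x; move: (\sum_j _) (tau / (2 * L)) => S c; lra.
Qed.

Let rho := tau / (2 * n%:R * L).
Let eps := eta ^+ 2 * 2 * n%:R * L ^+ 2 / tau.

Lemma expected_gap_step k :
  expected_gap f x0 xs alpha k.+1
    <= (1 - rho) * expected_gap f x0 xs alpha k + rho * eps.
Proof.
have L0 := lt_le_trans tau_gt0 tau_le_L.
have N0 : 0 < n%:R :> R by rewrite ltr0n.
rewrite /expected_gap sum_tuple_cons.
set S := \sum_(s : k.-tuple 'I_n) (f (iterate x0 alpha s) - f xs).
have sum_step : \sum_(s : k.-tuple 'I_n) \sum_(i < n) gap [tuple of i :: s]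
   <= (n%:R - tau / (2 * L)) * S + n%:R * (L * eta ^+ 2) * n%:R ^+ k.
  apply: le_trans (ler_sum _ (fun (s : k.-tuple 'I_n) _ => sum_coord_step_le s)) _.
  rewrite big_split /= -mulr_sumr sumr_const card_tuple card_ord.
  by rewrite -[_ *+ (n ^ k)]mulr_natr natrX.
apply: le_trans (ler_wpM2l _ sum_step) _.
  by rewrite invr_ge0 ltW // exprn_gt0.
rewrite exprS le_eqVlt; apply/orP; left; apply/eqP.
by rewrite /rho /eps; field; rewrite !gt_eqF // exprn_gt0.
Qed.

Lemma expected_gap_le k :
  expected_gap f x0 xs alpha k <= eps + (1 - rho) ^+ k * (f x0 - f xs - eps).
Proof.
have /andP[rho_gt0 rho_half] : 0 < rho <= 1 / 2 :=
  contraction_rate_bounds n_gt0 tau_gt0 tau_le_L.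
have rho_unit : 0 <= rho <= 1 by rewrite ltW //=; lra.
have := affine_contraction_unroll rho_unit expected_gap_step k.
by rewrite {2}/expected_gap sum_tuple0 expr0 invr1 mul1r.
Qed.

End ExpectedGap.

Theorem theorem5 (R : realType) (n : nat) (tau L eta : R)
    (f : vec R n -> R) (g : vec R n -> vec R n) (xstar x0 : vec R n)
    (alpha : seq 'I_n -> R) (Tl : R -> nat) (K : nat) :
  (0 < n)%N -> 0 < tau -> tau <= L -> 0 < eta ->
  is_gradient f g -> strongly_convex_grad f g tau -> lipschitz_grad g L ->
  is_minimizer f xstar ->
  accurate_linesearch f x0 alpha eta ->
  (0 < Tl eta)%N ->
  4 * n%:R * L / tau
    * ln ((f x0 - f xstar) / (eta ^+ 2 * 2 * n%:R * L ^+ 2 / tau))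
    * (Tl eta)%:R <= K%:R ->
  forall k : nat, (K %/ Tl eta <= k)%N ->
    expected_gap f x0 xstar alpha k <= 4 * n%:R * L ^+ 2 * eta ^+ 2 / tau.
Proof.
move=> n0 tau0 tauL eta0 _ sc lip _ accurate T0 HK k hk.
have L0 := lt_le_trans tau0 tauL.
have N0 : 0 < n%:R :> R by rewrite ltr0n.
set rho := tau / (2 * n%:R * L).
set eps := eta ^+ 2 * 2 * n%:R * L ^+ 2 / tau in HK *.
have rho_bounds : 0 < rho <= 1 / 2 := contraction_rate_bounds n0 tau0 tauL.
have rho0 : 0 < rho by case/andP: rho_bounds.
have eps0 : 0 < eps by rewrite /eps !mulr_gt0 ?invr_gt0 ?exprn_gt0.
have -> : 4 * n%:R * L ^+ 2 * eta ^+ 2 / tau = eps + eps.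
  by rewrite /eps; field; rewrite gt_eqF.
apply: le_trans (expected_gap_le xstar n0 tau0 tauL sc lip accurate k) _.
rewrite lerD2l; apply: geometric_tail_le => //.
rewrite (_ : 4 * n%:R * L / tau = 2 / rho) in HK; last by rewrite /rho; field; rewrite !gt_eqF.
have steps : 2 / rho * ln ((f x0 - f xstar) / eps) < k.+1%:R.
  rewrite -(ltr_pM2r (_ : 0 < (Tl eta)%:R)) ?ltr0n //; apply: le_lt_trans HK _.
  by rewrite -natrM ltr_nat (leq_trans (ltn_ceil K T0)) // leq_mul2r ltnS hk orbT.
have -> : 2 * ln ((f x0 - f xstar) / eps)
    = rho * (2 / rho * ln ((f x0 - f xstar) / eps)) by field; rewrite gt_eqF.
by rewrite ltr_pM2l.
Qed.
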